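(* For $\alpha\in[-1,1]$ let $\rho(\alpha)=\tfrac12(I+\alpha\sigma_z)=\mathrm{diag}\big(\tfrac{1+\alpha}{2},\tfrac{1-\alpha}{2}\big)$. For all $\alpha,\beta\in[-1,1]$, with $z_-=\min(\alpha,\beta)$, $z_+=\max(\alpha,\beta)$, the matrix $$\Pi(\alpha,\beta)=\frac12\begin{pmatrix}1+z_- & 0&0&\sqrt{(1+z_-)(1-z_+)}\\ 0&\max(\beta-\alpha,0)&0&0\\0&0&\max(\alpha-\beta,0)&0\\ \sqrt{(1+z_-)(1-z_+)}&0&0&1-z_+\end{pmatrix}$$ is an optimal coupling of $\rho(\alpha)$ and $\rho(\beta)$ for the cost $C_{\mathrm{symm},p}$, and $$D^p_{\mathrm{symm},p}(\rho(\alpha),\rho(\beta))=2^p\Big(1+\tfrac12|\alpha-\beta|-\sqrt{(1+\min(\alpha,\beta))(1-\max(\alpha,\beta))}\Big).$$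
   Context: Qubit setting: $\mathcal{H}=\mathbb{C}^2$, $\mathcal{H}^*$ is identified with $\mathbb{C}^2$ via the dual basis, and $A^T$ is the usual matrix transpose; operators on $\mathcal{H}\otimes\mathcal{H}^*$ are $4\times4$ matrices in the basis $e_1\otimes e_1^*,e_1\otimes e_2^*,e_2\otimes e_1^*,e_2\otimes e_2^*$. Pauli matrices: $\sigma_1=\sigma_x=\begin{pmatrix}0&1\\1&0\end{pmatrix}$, $\sigma_2=\sigma_y=\begin{pmatrix}0&-i\\i&0\end{pmatrix}$, $\sigma_3=\sigma_z=\begin{pmatrix}1&0\\0&-1\end{pmatrix}$. The set of couplings of states $\rho,\omega$ is $\mathcal{C}(\rho,\omega)=\{\Pi\in\mathcal{S}(\mathcal{H}\otimes\mathcal{H}^* ):\mathrm{tr}_{\mathcal{H}^*}[\Pi]=\omega,\ \mathrm{tr}_{\mathcal{H}}[\Pi]=\rho^T\}$. For $p\ge1$, $C_{\mathrm{symm},p}=\sum_{k=1}^3|\sigma_k\otimes I^T-I\otimes\sigma_k^T|^p$, which equals the matrix $\begin{pmatrix}2^p&0&0&-2^p\\0&2^{p+1}&0&0\\0&0&2^{p+1}&0\\-2^p&0&0&2^p\end{pmatrix}$, and $D_{\mathrm{symm},p}(\rho,\omega)=\big(\min_{\Pi\in\mathcal{C}(\rho,\omega)}\mathrm{tr}[\Pi C_{\mathrm{symm},p}]\big)^{1/p}$. *)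

From HB Require Import structures.
From mathcomp Require Import all_boot all_order all_algebra.
From mathcomp Require Import all_classical all_reals all_analysis.
From mathcomp Require Import complex.
Set Implicit Arguments. Unset Strict Implicit. Unset Printing Implicit Defensive.
Import Order.TTheory GRing.Theory Num.Theory.
Local Open Scope ring_scope.
Local Open Scope complex_scope.
Local Open Scope classical_set_scope.

Section QubitDefs.
Variable R : realType.
Local Notation C := R[i].

(* positive semidefinite: <v, A v> >= 0 for all v (order of the numClosedField C,
   so the quadratic form is in particular real) *)
Definition psd (n : nat) (A : 'M[C]_n) : Prop :=
  forall v : 'cV[C]_n, 0 <= ((map_mx Num.conj v)^T *m A *m v) 0 0.

Definition is_state (n : nat) (A : 'M[C]_n) : Prop := psd A /\ \tr A = 1.

(* basis index of e_i (x) e_j^* in C^2 (x) C^2*, ordered e1e1*, e1e2*, e2e1*, e2e2* *)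
Definition tidx (i j : 'I_2) : 'I_4 := inord (2 * i + j).

Definition ptr2 (P : 'M[C]_4) : 'M[C]_2 :=
  \matrix_(i < 2, i' < 2) \sum_(j < 2) P (tidx i j) (tidx i' j).

Definition ptr1 (P : 'M[C]_4) : 'M[C]_2 :=
  \matrix_(j < 2, j' < 2) \sum_(i < 2) P (tidx i j) (tidx i j').

Definition couplings (rho omega : 'M[C]_2) : set 'M[C]_4 :=
  [set P | is_state P /\ ptr2 P = omega /\ ptr1 P = rho^T].

Definition Csymm (p : R) : 'M[C]_4 :=
  let a := (2 `^ p)%:C in
  let b := (2 `^ (p + 1))%:C in
  \matrix_(k < 4, l < 4)
    match nat_of_ord k, nat_of_ord l with
    | 0%N, 0%N => a | 0%N, 3%N => - a
    | 1%N, 1%N => b | 2%N, 2%N => b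
    | 3%N, 0%N => - a | 3%N, 3%N => a
    | _, _ => 0
    end.

(* transport cost tr[P C_symm,p] (a real number for states P) *)
Definition cost (p : R) (P : 'M[C]_4) : R := complex.Re (\tr (P *m Csymm p)).

Definition Dsymm (p : R) (rho omega : 'M[C]_2) : R :=
  (inf [set cost p P | P in couplings rho omega]) `^ p^-1.

Definition optimal_coupling (p : R) (rho omega : 'M[C]_2) (P : 'M[C]_4) : Prop :=
  P \in couplings rho omega /\
  forall Q, Q \in couplings rho omega -> cost p P <= cost p Q.

Definition rhoz (a : R) : 'M[C]_2 :=
  \matrix_(i < 2, j < 2)
    if (i == j) then (if nat_of_ord i == 0%N then ((1 + a) / 2)%:C else ((1 - a) / 2)%:C)
    else 0.

Definition Pi_ab (a b : R) : 'M[C]_4 :=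
  let zm := Num.min a b in
  let zp := Num.max a b in
  let s := Num.sqrt ((1 + zm) * (1 - zp)) in
  \matrix_(k < 4, l < 4)
    match nat_of_ord k, nat_of_ord l with
    | 0%N, 0%N => ((1 + zm) / 2)%:C
    | 0%N, 3%N => (s / 2)%:C
    | 1%N, 1%N => (Num.max (b - a) 0 / 2)%:C
    | 2%N, 2%N => (Num.max (a - b) 0 / 2)%:C
    | 3%N, 0%N => (s / 2)%:C
    | 3%N, 3%N => ((1 - zp) / 2)%:C
    | _, _ => 0
    end.

End QubitDefs.

(* Write q_kl for the real part of the (k,l) entry of a coupling Q, indices
   0..3 standing for e1e1^*, e1e2^*, e2e1^*, e2e2^*.  The marginals give
   q11 - q22 = (b - a)/2 and q00 + q11 + q22 + q33 = 1, so the cost is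
   2^p (1 + (q11 + q22) - (q03 + q30)) with q11 + q22 >= |a - b|/2.  Positivity
   of Q gives (q03 + q30)^2 <= 4 q00 q33, and the marginals bound q00 by
   (1 + min a b)/2 and q33 by (1 - max a b)/2.  Pi(a, b) attains both bounds. *)
From HB Require Import structures.
From mathcomp Require Import all_boot all_order all_algebra.
From mathcomp Require Import all_classical all_reals all_analysis.
From mathcomp Require Import complex ring lra.
Set Implicit Arguments. Unset Strict Implicit. Unset Printing Implicit Defensive.
Import Order.TTheory GRing.Theory Num.Theory.
Local Open Scope ring_scope.
Local Open Scope complex_scope.

Section QubitTransport.
Variable R : realType.
Local Notation C := R[i].

Lemma ReD (x y : C) : complex.Re (x + y) = complex.Re x + complex.Re y.
Proof. by case: x; case: y. Qed.

Lemma ReN (x : C) : complex.Re (- x) = - complex.Re x.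
Proof. by case: x. Qed.

Lemma Re_sum (I : Type) (r : seq I) (P : pred I) (F : I -> C) :
  complex.Re (\sum_(i <- r | P i) F i) = \sum_(i <- r | P i) complex.Re (F i).
Proof. exact: (big_morph _ ReD). Qed.

Lemma ReMr (x : C) (r : R) : complex.Re (x * r%:C) = complex.Re x * r.
Proof. by case: x => u w /=; ring. Qed.

Lemma Re_conj_realM (r s : R) (x : C) :
  complex.Re ((r%:C)^* * x * s%:C) = r * complex.Re x * s.
Proof. by case: x => u w /=; ring. Qed.

Lemma inf_attained (E : set R) (x : R) : E x -> lbound E x -> inf E = x.
Proof.
move=> Ex lbx; apply/eqP; rewrite eq_le lb_le_inf; last by [].
  by rewrite andbT; apply: ge_inf => //; exists x.
by exists x.
Qed.

Lemma discriminant_le (A B C0 : R) :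
  0 <= A -> (forall t, 0 <= A * t ^+ 2 + B * t + C0) -> B ^+ 2 <= 4 * A * C0.
Proof.
move=> A0 ge0; have [eA|Ap] := eqVneq A 0.
  rewrite eA in ge0 *; have [->|Bn0] := eqVneq B 0; first by rewrite expr0n mulr0 mul0r.
  by have := ge0 (- (C0 + 1) / B); rewrite mul0r add0r mulrC mulfVK //; lra.
have Agt0 : 0 < A by rewrite lt0r Ap.
have := ge0 (- B / (2 * A)).
have -> : A * (- B / (2 * A)) ^+ 2 + B * (- B / (2 * A)) + C0
          = (4 * A * C0 - B ^+ 2) / (4 * A) by field; rewrite Ap.
by rewrite pmulr_lge0 ?subr_ge0 // invr_gt0; lra.
Qed.

Lemma qf_expand (n : nat) (Q : 'M[C]_n) (v : 'cV[C]_n) :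
  ((map_mx Num.conj v)^T *m Q *m v) 0 0 =
  \sum_i \sum_j Num.conj (v i 0) * Q i j * v j 0.
Proof.
rewrite mxE; under eq_bigr => j _ do rewrite mxE big_distrl /=.
by rewrite exchange_big; apply: eq_bigr => i _; apply: eq_bigr => j _; rewrite !mxE.
Qed.

Lemma psd_re_form (n : nat) (Q : 'M[C]_n) (c : 'I_n -> R) : psd Q ->
  0 <= \sum_i \sum_j c i * complex.Re (Q i j) * c j.
Proof.
move=> /(_ (\col_i (c i)%:C)); rewrite qf_expand lecE => /andP[_].
rewrite Re_sum; under eq_bigr => i _ do rewrite Re_sum.
by under eq_bigr => i _ do under eq_bigr => j _ do rewrite !mxE Re_conj_realM.
Qed.

Lemma psd_re_pair (n : nat) (Q : 'M[C]_n) (i j : 'I_n) (t u : R) : psd Q ->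
  0 <= complex.Re (Q i i) * t ^+ 2 + (complex.Re (Q i j) + complex.Re (Q j i)) * (t * u)
       + complex.Re (Q j j) * u ^+ 2.
Proof.
move=> /(psd_re_form (fun k => t * (k == i)%:R + u * (k == j)%:R)).
have pick (k0 : 'I_n) (G : 'I_n -> R) : \sum_k (k == k0)%:R * G k = G k0.
  by rewrite (bigD1 k0) //= eqxx mul1r big1 ?addr0 // => k /negbTE ->; rewrite mul0r.
have sum_pair (G : 'I_n -> R) :
    \sum_k (t * (k == i)%:R + u * (k == j)%:R) * G k = t * G i + u * G j.
  by under eq_bigr do rewrite mulrDl -!mulrA; rewrite big_split /= -!mulr_sumr !pick.
under eq_bigr do under eq_bigr do rewrite -mulrA (mulrC (complex.Re _)).
under eq_bigr do rewrite -mulr_sumr sum_pair.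
by rewrite sum_pair; congr (_ <= _); ring.
Qed.

Lemma psd_re_diag_ge0 (n : nat) (Q : 'M[C]_n) (i : 'I_n) : psd Q -> 0 <= complex.Re (Q i i).
Proof. by move=> /(psd_re_pair i i 1 0); rewrite !(mul0r, mulr0, expr0n, addr0) expr1n mulr1. Qed.

Lemma psd_re_offdiag (n : nat) (Q : 'M[C]_n) (i j : 'I_n) : psd Q ->
  (complex.Re (Q i j) + complex.Re (Q j i)) ^+ 2
  <= 4 * complex.Re (Q i i) * complex.Re (Q j j).
Proof.
move=> psdQ; apply: discriminant_le; first exact: psd_re_diag_ge0.
by move=> t; have := psd_re_pair i j t 1 psdQ; rewrite mulr1 expr1n mulr1.
Qed.

Lemma sum_ord2 (V : nmodType) (F : 'I_2 -> V) : \sum_(i < 2) F i = F (inord 0) + F (inord 1).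
Proof.
rewrite !big_ord_recl big_ord0 addr0.
by congr (_ + _); congr F; apply: val_inj; rewrite /= inordK.
Qed.

Lemma sum_ord4 (V : nmodType) (F : 'I_4 -> V) :
  \sum_(i < 4) F i = F (inord 0) + F (inord 1) + F (inord 2) + F (inord 3).
Proof.
rewrite !big_ord_recl big_ord0 addr0 !addrA.
by congr (_ + _ + _ + _); congr F; apply: val_inj; rewrite /= inordK.
Qed.

Definition re4 (Q : 'M[C]_4) (k l : nat) : R := complex.Re (Q (inord k) (inord l)).

Lemma cost_re4 (p : R) (Q : 'M[C]_4) : cost p Q =
  2 `^ p * (re4 Q 0 0 + re4 Q 3 3 - (re4 Q 0 3 + re4 Q 3 0) + 2 * (re4 Q 1 1 + re4 Q 2 2)).
Proof.
rewrite /cost /re4 /mxtrace sum_ord4 !mxE !sum_ord4 !mxE !inordK //=.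
rewrite powRD ?pnatr_eq0 ?implybT // powRr1 //.
by rewrite !mulr0 !addr0 !add0r !mulrN !ReD !ReN !ReMr; ring.
Qed.

Lemma coupling_re4_marginals (a b : R) (Q : 'M[C]_4) : Q \in couplings (rhoz a) (rhoz b) ->
  [/\ re4 Q 0 0 + re4 Q 1 1 = (1 + b) / 2, re4 Q 2 2 + re4 Q 3 3 = (1 - b) / 2,
      re4 Q 0 0 + re4 Q 2 2 = (1 + a) / 2 & re4 Q 1 1 + re4 Q 3 3 = (1 - a) / 2].
Proof.
rewrite inE => -[_ [/matrixP marg2 /matrixP marg1]].
have re2 k := congr1 (@complex.Re R) (marg2 k k).
have re1 k := congr1 (@complex.Re R) (marg1 k k).
move: (re2 (inord 0)) (re2 (inord 1)) (re1 (inord 0)) (re1 (inord 1)).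
by rewrite /re4 !mxE !sum_ord2 /tidx !inordK // !eqxx /= !ReD; split.
Qed.

Definition opt_cost (a b : R) : R :=
  1 + `|a - b| / 2 - Num.sqrt ((1 + Num.min a b) * (1 - Num.max a b)).

Lemma cost_coupling_ge (p a b : R) (Q : 'M[C]_4) : Q \in couplings (rhoz a) (rhoz b) ->
  2 `^ p * opt_cost a b <= cost p Q.
Proof.
move=> HQ; have psdQ : psd Q by move: HQ; rewrite inE => -[[]].
have [Eb0 Eb1 Ea0 Ea1] := coupling_re4_marginals HQ.
have q_ge0 k : 0 <= re4 Q k k := psd_re_diag_ge0 _ psdQ.
have q11_ge0 := q_ge0 1%N; have q22_ge0 := q_ge0 2%N.
have q00_le : 2 * re4 Q 0 0 <= 1 + Num.min a b.
  suff : 2 * re4 Q 0 0 - 1 <= Num.min a b by lra.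
  by rewrite le_min; apply/andP; split; lra.
have q33_le : 2 * re4 Q 3 3 <= 1 - Num.max a b.
  suff : Num.max a b <= 1 - 2 * re4 Q 3 3 by lra.
  by rewrite ge_max; apply/andP; split; lra.
have offdiag_le : re4 Q 0 3 + re4 Q 3 0 <= Num.sqrt ((1 + Num.min a b) * (1 - Num.max a b)).
  apply: le_trans (ler_norm _) _; rewrite -sqrtr_sqr ler_wsqrtr //.
  apply: le_trans (psd_re_offdiag (inord 0) (inord 3) psdQ) _.
  rewrite (_ : 4 * _ * _ = (2 * re4 Q 0 0) * (2 * re4 Q 3 3)); last by rewrite /re4; ring.
  by apply: ler_pM => //; rewrite mulr_ge0.
have diff_le : `|a - b| / 2 <= re4 Q 1 1 + re4 Q 2 2.
  by rewrite ler_pdivrMr // ler_norml; apply/andP; split; lra.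
by rewrite cost_re4 /opt_cost; apply: ler_wpM2l; [exact: powR_ge0 | lra].
Qed.

Lemma binary_form_ge0 (x y s u w : R) : 0 <= x -> 0 <= y -> s ^+ 2 = x * y ->
  0 <= x * u ^+ 2 + 2 * s * u * w + y * w ^+ 2.
Proof.
move=> x0 y0 sxy; have [x_eq0|x_neq0] := eqVneq x 0.
  have /eqP : s ^+ 2 = 0 by rewrite sxy x_eq0 mul0r.
  by rewrite sqrf_eq0 x_eq0 => /eqP ->; nra.
have x_gt0 : 0 < x by rewrite lt0r x_neq0.
rewrite -(pmulr_rge0 _ x_gt0).
have -> : x * (x * u ^+ 2 + 2 * s * u * w + y * w ^+ 2) = (x * u + s * w) ^+ 2.
  by rewrite sqrrD !exprMn sxy; ring.
exact: sqr_ge0.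
Qed.

Definition cornermx (x y d1 d2 s : R) : 'M[C]_4 :=
  \matrix_(k < 4, l < 4)
    match nat_of_ord k, nat_of_ord l with
    | 0%N, 0%N => x%:C
    | 0%N, 3%N => s%:C
    | 1%N, 1%N => d1%:C
    | 2%N, 2%N => d2%:C
    | 3%N, 0%N => s%:C
    | 3%N, 3%N => y%:C
    | _, _ => 0
    end.

Lemma cornermx_psd (x y d1 d2 s : R) : 0 <= x -> 0 <= y -> 0 <= d1 -> 0 <= d2 ->
  s ^+ 2 = x * y -> psd (cornermx x y d1 d2 s).
Proof.
move=> x0 y0 d10 d20 sxy v; rewrite qf_expand !sum_ord4 !mxE !inordK //=.
rewrite !mulr0 !mul0r !addr0 !add0r.
move: (v _ 0) (v _ 0) (v _ 0) (v _ 0) => [u0 w0] [u1 w1] [u2 w2] [u3 w3].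
rewrite -!complexr0; simpc; apply/andP; split; first by apply/eqP; ring.
have := binary_form_ge0 u3 u2 x0 y0 sxy; have := binary_form_ge0 w3 w2 x0 y0 sxy.
have := mulr_ge0 d10 (addr_ge0 (sqr_ge0 u1) (sqr_ge0 w1)).
have := mulr_ge0 d20 (addr_ge0 (sqr_ge0 u0) (sqr_ge0 w0)).
lra.
Qed.

Lemma cornermx_coupling (a b x y d1 d2 s : R) :
  0 <= x -> 0 <= y -> 0 <= d1 -> 0 <= d2 -> s ^+ 2 = x * y ->
  x + d1 = (1 + b) / 2 -> y + d2 = (1 - b) / 2 ->
  x + d2 = (1 + a) / 2 -> y + d1 = (1 - a) / 2 ->
  cornermx x y d1 d2 s \in couplings (rhoz a) (rhoz b).
Proof.
move=> x0 y0 d10 d20 sxy Eb0 Eb1 Ea0 Ea1; rewrite inE; split; first split.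
- exact: cornermx_psd.
- rewrite /mxtrace sum_ord4 !mxE !inordK //= -!rmorphD.
  by congr (_%:C); lra.
split; apply/matrixP => i j; rewrite !mxE sum_ord2 /tidx.
all: case: i => [[|[|//]] ?]; case: j => [[|[|//]] ?]; rewrite !mxE !inordK //=.
all: by rewrite ?addr0 // -rmorphD; congr (_%:C); lra.
Qed.

Lemma cost_cornermx (p x y d1 d2 s : R) :
  cost p (cornermx x y d1 d2 s) = 2 `^ p * (x + y - 2 * s + 2 * (d1 + d2)).
Proof. by rewrite cost_re4 /re4 !mxE !inordK //=; congr (_ * _); ring. Qed.

Lemma max_subr0 (a b : R) : Num.max (a - b) 0 = a - Num.min a b.
Proof. by case: (leP a b) => h; [rewrite max_r | rewrite max_l]; lra. Qed.

Lemma normB_min (a b : R) : `|a - b| = a + b - 2 * Num.min a b.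
Proof. by case: (leP a b) => h; [rewrite ler0_norm | rewrite gtr0_norm]; lra. Qed.

Lemma Pi_ab_cornermx (a b : R) : Pi_ab a b =
  cornermx ((1 + Num.min a b) / 2) ((1 - Num.max a b) / 2)
    ((b - Num.min a b) / 2) ((a - Num.min a b) / 2)
    (Num.sqrt ((1 + Num.min a b) * (1 - Num.max a b)) / 2).
Proof. by rewrite /Pi_ab !max_subr0 (minC b a). Qed.

Lemma cost_Pi_ab (p a b : R) : cost p (Pi_ab a b) = 2 `^ p * opt_cost a b.
Proof.
rewrite Pi_ab_cornermx cost_cornermx /opt_cost normB_min maxr_to_min.
by congr (_ * _); lra.
Qed.

Lemma Pi_ab_coupling (a b : R) : -1 <= a <= 1 -> -1 <= b <= 1 ->
  Pi_ab a b \in couplings (rhoz a) (rhoz b).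
Proof.
move=> /andP[a_ge a_le] /andP[b_ge b_le].
have min_ge : -1 <= Num.min a b by rewrite le_min a_ge b_ge.
have max_le : Num.max a b <= 1 by rewrite ge_max a_le b_le.
have min_le : Num.min a b <= a /\ Num.min a b <= b by rewrite !ge_min !lexx orbT.
have maxE := maxr_to_min a b.
rewrite Pi_ab_cornermx; apply: cornermx_coupling; try lra.
by rewrite expr_div_n sqr_sqrtr; [field | apply: mulr_ge0; lra].
Qed.

Lemma opt_cost_ge0 (a b : R) : -1 <= a <= 1 -> -1 <= b <= 1 -> 0 <= opt_cost a b.
Proof.
move=> /andP[a_ge a_le] /andP[b_ge b_le].
have min_ge : -1 <= Num.min a b by rewrite le_min a_ge b_ge.
have min_le_max : Num.min a b <= Num.max a b by rewrite ge_min le_max lexx.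
have max_le : Num.max a b <= 1 by rewrite ge_max a_le b_le.
have : Num.sqrt ((1 + Num.min a b) * (1 - Num.max a b)) <= 1.
  rewrite -[X in _ <= X]sqrtr1 ler_wsqrtr //.
  have : 0 <= (1 + Num.min a b) * (Num.max a b - Num.min a b) by apply: mulr_ge0; lra.
  by have := sqr_ge0 (Num.min a b); nra.
by rewrite /opt_cost; have := normr_ge0 (a - b); lra.
Qed.

End QubitTransport.

Theorem proposition3p1 (R : realType) (p a b : R) :
  1 <= p -> -1 <= a <= 1 -> -1 <= b <= 1 ->
  optimal_coupling p (rhoz a) (rhoz b) (Pi_ab a b) /\
  (Dsymm p (rhoz a) (rhoz b)) `^ p =
    2 `^ p * (1 + `|a - b| / 2 - Num.sqrt ((1 + Num.min a b) * (1 - Num.max a b))).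
Proof.
move=> p_ge1 ab bb; have Pi_in := Pi_ab_coupling ab bb.
have Pi_opt Q : Q \in couplings (rhoz a) (rhoz b) -> cost p (Pi_ab a b) <= cost p Q.
  by rewrite cost_Pi_ab; exact: cost_coupling_ge.
split; first by split.
rewrite /Dsymm.
have -> : inf [set cost p Q | Q in couplings (rhoz a) (rhoz b)] = cost p (Pi_ab a b).
  apply: inf_attained; first by exists (Pi_ab a b); first exact: set_mem.
  by move=> _ [Q /mem_set /Pi_opt Pi_le <-].
rewrite -powRrM mulVf; last by rewrite gt_eqF // (lt_le_trans ltr01 p_ge1).
by rewrite cost_Pi_ab powRr1 // mulr_ge0 ?powR_ge0 ?opt_cost_ge0.
Qed.
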